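(* Let $X$ be a finite nonempty set partitioned into nonempty classes $(C_j)_{j\in J}$, choose $r_j\in C_j$ for each $j$, and set $R=\{r_j:j\in J\}$, $I=X\setminus R$, $\mathcal A=\mathcal P(X)$. Choose weights $w_j\in\{0,1\}$ with $\sum_j w_j>0$ and define $\mu(B)=\sum_{j\in J:\,r_j\in B}w_j$ for $B\subseteq X$. Define $\Pi_R:X\to R$ by $\Pi_R(x)=r_j$ for $x\in C_j$, $G=\bigcup_{j\in J}(C_j\times C_j)$, $E_0=\mu(X)$, $\eta=0$, and let $\mu^{\otimes2}(S)=\sum_{(x,y)\in S}m(x)m(y)$ for $S\subseteq X\times X$, where $m(x)=\mu(\{x\})$. Then $(X,\mathcal A,\mu,\mu^{\otimes2},R,I,\Pi_R,G,E_0,\eta)$ is an admissible structural model. In particular, there exist finite admissible structural models in which $G$ is not contained in the diagonal (namely whenever some $C_j$ has more than one element).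
   Context: For relations, $H\circ K=\{(x,z):\exists y\,(x,y)\in H,(y,z)\in K\}$. An admissible structural model is a tuple $(X,\mathcal A,\mu,\mu^{\otimes2},R,I,\Pi_R,G,E_0,\eta)$ with $X$ nonempty, $\mathcal A$ an algebra on $X$, $\mu:\mathcal A\to[0,\infty)$ finitely additive, $\mu^{\otimes2}$ finitely additive on the product algebra with $\mu^{\otimes2}(B_1\times B_2)=\mu(B_1)\mu(B_2)$, $R,I\in\mathcal A$ disjoint, $\Pi_R:X\to R$, $G$ in the product algebra, $E_0>0$, $\eta\in[0,1]$, satisfying: Axiom I: $\Pi_R\circ\Pi_R=\Pi_R$, $\Pi_R|_R=\mathrm{id}_R$, $\Pi_R^{-1}(B)\in\mathcal A$ for measurable $B\subseteq R$; Axiom II: $G$ reflexive, symmetric, $G\circ G=G$; Axiom III: $\mu(R)+\mu(I)=E_0$, $\mu(\Pi_R^{-1}(B))=\mu(B)$ for measurable $B\subseteq R$, and for all $B\in\mathcal A$, $\mu^{\otimes2}((B\times X)\cap G)=\mu(B)+\eta\,\mu^{\otimes2}((\Pi_R^{-1}(B)\times X)\cap G)$. *)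

From HB Require Import structures.
From mathcomp Require Import all_boot all_order all_algebra.
From mathcomp Require Import boolp classical_sets reals.
Set Implicit Arguments. Unset Strict Implicit. Unset Printing Implicit Defensive.
Import Order.TTheory GRing.Theory Num.Theory.
Local Open Scope classical_set_scope.
Local Open Scope ring_scope.

Definition is_algebra (T : Type) (A : set (set T)) : Prop :=
  A set0 /\ (forall B, A B -> A (~` B)) /\
  (forall B C, A B -> A C -> A (B `|` C)).

Definition prod_algebra (T : Type) (A : set (set T)) : set (set (T * T)) :=
  fun S => forall P : set (set (T * T)), is_algebra P ->
    (forall B1 B2, A B1 -> A B2 -> P (B1 `*` B2)) -> P S.

Definition fin_additive (R : realType) (T : Type) (A : set (set T))
  (mu : set T -> R) : Prop :=
  mu set0 = 0 /\ (forall B, A B -> 0 <= mu B) /\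
  (forall B C, A B -> A C -> B `&` C = set0 -> mu (B `|` C) = mu B + mu C).

Definition rel_comp (T : Type) (H K : set (T * T)) : set (T * T) :=
  [set p | exists y, H (p.1, y) /\ K (y, p.2)].

(* Admissible structural model (X, A, mu, mu2, R, I, Pi_R, G, E0, eta),
   with X the whole carrier type T. *)
Definition admissible (Rl : realType) (T : Type) (A : set (set T))
  (mu : set T -> Rl) (mu2 : set (T * T) -> Rl) (Rs Is : set T)
  (Pi : T -> T) (G : set (T * T)) (E0 eta : Rl) : Prop :=
  [/\ (exists x : T, True), is_algebra A, fin_additive A mu,
      fin_additive (prod_algebra A) mu2 &
      [/\ (forall B1 B2, A B1 -> A B2 -> mu2 (B1 `*` B2) = mu B1 * mu B2),
          A Rs /\ A Is /\ Rs `&` Is = set0,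
          (forall x, Rs (Pi x)),
          prod_algebra A G /\ 0 < E0 /\ 0 <= eta <= 1 &
  [/\ (forall x, Pi (Pi x) = Pi x),
      (forall x, Rs x -> Pi x = x),
      (forall B, A B -> B `<=` Rs -> A (Pi @^-1` B)),
      (forall x, G (x, x)) /\ (forall x y, G (x, y) -> G (y, x)) /\
      rel_comp G G = G &
  [/\ mu Rs + mu Is = E0,
      (forall B, A B -> B `<=` Rs -> mu (Pi @^-1` B) = mu B) &
      (forall B, A B -> mu2 ((B `*` setT) `&` G) =
                        mu B + eta * mu2 (((Pi @^-1` B) `*` setT) `&` G))]]]].

From HB Require Import structures.
From mathcomp Require Import all_boot all_order all_algebra.
From mathcomp Require Import boolp classical_sets reals.
Set Implicit Arguments. Unset Strict Implicit. Unset Printing Implicit Defensive.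
Import Order.TTheory GRing.Theory Num.Theory.
Local Open Scope classical_set_scope.
Local Open Scope ring_scope.

(** All measures of the model are sums of point masses: [mu] is the pushforward
    of the weights [w] along [r], so its atoms are the representatives [r j],
    and [mu2] is the product of [mu] with itself.  Since [G] is the kernel of the
    class map [c], the [G]-section over [x] has mass [w (c x)], which is [1]
    whenever [x] carries mass; this gives Axiom III with [eta = 0].  On a finite
    set every subset is a finite union of singletons, i.e. of rectangles, so the
    product algebra of the power set is again the power set. *)

Definition wsum (R : numDomainType) (T : finType) (f : T -> R) (B : set T) : R :=
  \sum_(x | `[< B x >]) f x.

Section WeightedSum.
Variables (R : numDomainType) (T : finType).
Implicit Types (f : T -> R) (A B : set T).

Lemma wsum_set0 f : wsum f set0 = 0.
Proof. by rewrite /wsum big_pred0 // => x; apply: asboolF. Qed.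

Lemma wsum_setT f : wsum f setT = \sum_x f x.
Proof. by apply: eq_bigl => x; apply: asboolT. Qed.

Lemma wsum_ge0 f B : (forall x, 0 <= f x) -> 0 <= wsum f B.
Proof. by move=> f_ge0; apply: sumr_ge0. Qed.

Lemma wsum_mull a f B : wsum (fun x => a * f x) B = a * wsum f B.
Proof. by rewrite /wsum mulr_sumr. Qed.

Lemma wsum_setU f A B :
  A `&` B = set0 -> wsum f (A `|` B) = wsum f A + wsum f B.
Proof.
move=> AB0; rewrite /wsum !(big_mkcond (fun x => `[< _ >])) -big_split.
apply: eq_bigr => x _ /=.
have [Ax|nAx] := pselect (A x); have [Bx|nBx] := pselect (B x).
- by have : (A `&` B) x by []; rewrite AB0.
- by rewrite asboolT ?(asboolT Ax) ?(asboolF nBx) ?addr0 //; left.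
- by rewrite asboolT ?(asboolT Bx) ?(asboolF nAx) ?add0r //; right.
- by rewrite !asboolF ?addr0 // => -[].
Qed.

Lemma wsum_preimage (J : finType) (g : J -> T) (f : J -> R) B :
  wsum f (g @^-1` B) = wsum (fun x => wsum f (g @^-1` [set x])) B.
Proof.
rewrite /wsum (partition_big g (fun x => `[< B x >])) => [|j /asboolP//].
apply: eq_bigr => x /asboolP Bx; apply: eq_bigl => j.
apply/andP/asboolP => [[_ /eqP //]|/= gjx].
by split; [apply/asboolP; rewrite /= gjx | apply/eqP].
Qed.

Lemma wsum_pair_section (T' : finType) (F : T * T' -> R) A
    (E : T -> set T') :
  wsum F [set p | A p.1 /\ E p.1 p.2] =
  wsum (fun x => wsum (fun y => F (x, y)) (E x)) A.
Proof.
rewrite /wsum pair_big_dep; apply: eq_big => -[x y] //=.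
apply/asboolP/andP => [[Ax Exy]|[/asboolP Ax /asboolP Exy]] //.
by split; apply/asboolP.
Qed.

Lemma wsum_setX f (g : T -> R) A B :
  wsum (fun p => f p.1 * g p.2) (A `*` B) = wsum f A * wsum g B.
Proof.
rewrite (wsum_pair_section _ _ (fun=> B)) [RHS]mulrC -wsum_mull.
by apply: eq_bigr => x _ /=; rewrite wsum_mull mulrC.
Qed.

End WeightedSum.

Lemma wsum_fin_additive (R : realType) (T : finType) (f : T -> R)
    (A : set (set T)) :
  (forall x, 0 <= f x) -> fin_additive A (wsum f).
Proof.
move=> f_ge0; split; first exact: wsum_set0.
by split=> [B _|B C _ _]; [exact: wsum_ge0 | exact: wsum_setU].
Qed.

Lemma algebra_mem_seq (U : eqType) (P : set (set U)) :
  is_algebra P -> (forall x, P [set x]) -> forall s : seq U, P [set x | x \in s].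
Proof.
move=> [P0 [_ PU]] P1; elim=> [|a s IHs].
  by rewrite (_ : [set x | x \in [::]] = set0) //; apply/seteqP; split.
rewrite (_ : [set x | x \in a :: s] = [set a] `|` [set x | x \in s]).
  exact: PU.
apply/seteqP; split=> x /=; rewrite in_cons.
  by case/orP=> [/eqP|]; [left|right].
by case=> [->|->]; rewrite ?eqxx ?orbT.
Qed.

Lemma finite_algebra_full (U : finType) (P : set (set U)) :
  is_algebra P -> (forall x, P [set x]) -> forall S, P S.
Proof.
move=> algP P1 S.
rewrite (_ : S = [set x | x \in [seq x <- enum U | `[< S x >]]]).
  exact: algebra_mem_seq.
by apply/seteqP; split=> x; rewrite /= mem_filter mem_enum andbT => /asboolP.
Qed.

Lemma prod_algebra_setT (U : finType) (S : set (U * U)) :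
  prod_algebra setT S.
Proof.
move=> P algP rectP; apply: finite_algebra_full => // -[a b].
rewrite (_ : [set (a, b)] = [set a] `*` [set b]); first exact: rectP.
by apply/seteqP; split=> -[x y] /=; [case=> -> -> | case=> -> ->].
Qed.

Lemma rel_comp_kernel (T J : Type) (c : T -> J) :
  let G := [set p : T * T | c p.1 = c p.2] in rel_comp G G = G.
Proof.
apply/seteqP; split=> -[x z] /=; first by case=> y [-> ->].
by exists z.
Qed.

Section ClassWeights.
Variables (R : numDomainType) (X J : finType) (c : X -> J) (r : J -> X).
Hypothesis rK : forall j, c (r j) = j.
Variable w : J -> R.
Hypothesis w01 : forall j, w j = 0 \/ w j = 1.

Local Notation m x := (wsum w (r @^-1` [set x])).

Lemma wsum_atoms_class k : wsum (fun x => m x) [set y | c y = k] = w k.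
Proof.
rewrite -wsum_preimage /wsum (big_pred1 k) // => j /=.
by apply/asboolP/eqP => [<-|->]; rewrite rK.
Qed.

Lemma atom_mul_class_weight x : m x * w (c x) = m x.
Proof.
rewrite /wsum mulr_suml; apply: eq_bigr => j /asboolP /= <-.
by rewrite rK; case: (w01 j) => ->; rewrite ?mul0r ?mulr1.
Qed.

Lemma wsum_prod_class_section B :
  wsum (fun p => m p.1 * m p.2) ((B `*` setT) `&` [set p | c p.1 = c p.2]) =
  wsum (fun x => m x) B.
Proof.
rewrite (_ : _ `&` _ = [set p | B p.1 /\ [set y | c y = c p.1] p.2]).
  rewrite (wsum_pair_section _ _ (fun x => [set y | c y = c x])).
  apply: eq_bigr => x _ /=.
  by rewrite wsum_mull wsum_atoms_class atom_mul_class_weight.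
by apply/seteqP; split=> -[x y] /=; [case=> -[Bx _] -> | case=> Bx <-].
Qed.

End ClassWeights.

Theorem proposition5p10 (Rl : realType) (X J : finType) (x0 : X)
  (c : X -> J) (hcls : forall j, exists x, c x = j)
  (r : J -> X) (hr : forall j, c (r j) = j)
  (w : J -> Rl) (hw : forall j, w j = 0 \/ w j = 1)
  (hwpos : 0 < \sum_(j : J) w j) :
  let mu : set X -> Rl := fun B => \sum_(j : J | `[< B (r j) >]) w j in
  let m : X -> Rl := fun x => mu [set x] in
  let mu2 : set (X * X) -> Rl :=
    fun S => \sum_(p : X * X | `[< S p >]) m p.1 * m p.2 in
  let Rs : set X := [set x | exists j, r j = x] in
  let Is : set X := ~` Rs in
  let Pi : X -> X := fun x => r (c x) in
  let G : set (X * X) := [set p | c p.1 = c p.2] in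
  admissible (setT : set (set X)) mu mu2 Rs Is Pi G (mu setT) 0 /\
  ((exists x y : X, c x = c y /\ x <> y) ->
     ~ (G `<=` [set p | p.1 = p.2])).
Proof.
move=> mu m mu2 Rs Is Pi G.
have m_ge0 x : 0 <= m x by apply: wsum_ge0 => j; case: (hw j) => ->.
have muE : mu = wsum m by apply: funext => B; apply: wsum_preimage.
have mu_add : fin_additive setT mu by rewrite muE; exact: wsum_fin_additive.
have mu2_add : fin_additive (prod_algebra setT) mu2.
  by apply: wsum_fin_additive => p; apply: mulr_ge0.
split=> [|[x [y [cxy xy]]] /(_ (x, y) cxy) //].
split; [by exists x0 | by [] | exact: mu_add | exact: mu2_add |].
split.
- by move=> B1 B2 _ _; rewrite muE; exact: wsum_setX.
- by split=> //; split=> //; apply: setICr.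
- by move=> x; exists (c x).
- split; first exact: prod_algebra_setT.
  by rewrite -[mu setT]/(wsum w setT) wsum_setT lexx ler01.
split=> //.
- by move=> x; rewrite /Pi hr.
- by move=> x [j <-]; rewrite /Pi hr.
- by split=> //; split=> [x y /esym //|]; exact: rel_comp_kernel.
split.
- by case: mu_add => _ [_ <-] //; rewrite /Is ?setUv ?setICr.
- by move=> B _ _; apply: eq_bigl => j; rewrite /preimage /Pi /= hr.
- by move=> B _; rewrite mul0r addr0 muE; exact: wsum_prod_class_section.
Qed.
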